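(* Let $\mathbf{t}\in\mathrm{Sym}^2(\mathbb{R}^3)$ be transversely isotropic and $\mathbf{H}\in\mathbb{H}^4$. Then the pair $(\mathbf{H},\mathbf{t})$ is trigonal, tetragonal or transversely isotropic iff the triple $(\mathbf{d}_2,\mathbf{t},\mathbf{H}:\mathbf{t})$ is transversely isotropic.
   Context: $\mathbb{H}^4$ is the space of totally symmetric traceless fourth-order tensors on $\mathbb{R}^3$, with $SO(3)$-action $(g\star\mathbf{T})(x_1,\dots,x_n)=\mathbf{T}(g^{-1}x_1,\dots,g^{-1}x_n)$. $(\mathbf{H}:\mathbf{H})_{ijkl}=H_{ijmn}H_{mnkl}$, $(\mathbf{H}:\mathbf{a})_{ij}=H_{ijkl}a_{kl}$, $(\operatorname{tr}_{13}\mathbf{A})_{ij}=A_{kikj}$, $\mathbf{d}_2=\operatorname{tr}_{13}(\mathbf{H}:\mathbf{H})$. Symmetry group of a family: intersection of $\{g:g\star\mathbf{T}=\mathbf{T}\}$; class: conjugacy class. Transversely isotropic $=[O(2)]$, tetragonal $=[\mathbb{D}_4]$, trigonal $=[\mathbb{D}_3]$ ($O(2)$: rotations about the $z$-axis and the rotation by $\pi$ about the $x$-axis; $\mathbb{D}_n$ generated by the rotation by $2\pi/n$ about the $z$-axis and the rotation by $\pi$ about the $x$-axis). *)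

From HB Require Import structures.
From mathcomp Require Import all_boot all_order all_algebra all_fingroup.
From mathcomp Require Import all_classical all_reals all_analysis.
Set Implicit Arguments. Unset Strict Implicit. Unset Printing Implicit Defensive.
Import Order.TTheory GRing.Theory Num.Theory.
Local Open Scope classical_set_scope.
Local Open Scope ring_scope.

Section Defs.
Variable R : realType.

Definition tensor2 := 'M[R]_3.
Definition tensor4 := 'I_3 -> 'I_3 -> 'I_3 -> 'I_3 -> R.

Definition SO3 : set 'M[R]_3 :=
  [set g | g *m g^T = 1%:M /\ \det g = 1].

(* Action (g * T)(x1,..,xn) = T(g^-1 x1, .., g^-1 xn), in components *)
Definition act2 (g : 'M[R]_3) (t : tensor2) : tensor2 :=
  \matrix_(i < 3, j < 3)
    \sum_(a < 3) \sum_(b < 3) invmx g a i * invmx g b j * t a b.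

Definition act4 (g : 'M[R]_3) (H : tensor4) : tensor4 :=
  fun i j k l =>
    \sum_(a < 3) \sum_(b < 3) \sum_(c < 3) \sum_(d < 3)
      invmx g a i * invmx g b j * invmx g c k * invmx g d l * H a b c d.

Definition is_sym2 (t : tensor2) : Prop := t^T = t.

Definition totally_symmetric4 (H : tensor4) : Prop :=
  forall (s : 'S_4) (x : 'I_4 -> 'I_3),
    let y := fun m => x (s m) in
    H (y (inord 0)) (y (inord 1)) (y (inord 2)) (y (inord 3))
    = H (x (inord 0)) (x (inord 1)) (x (inord 2)) (x (inord 3)).

Definition traceless4 (H : tensor4) : Prop :=
  forall k l : 'I_3, \sum_(i < 3) H i i k l = 0.

Definition isH4 (H : tensor4) : Prop := totally_symmetric4 H /\ traceless4 H.

Definition ddot44 (H K : tensor4) : tensor4 :=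
  fun i j k l => \sum_(m < 3) \sum_(n < 3) H i j m n * K m n k l.

Definition tr13 (A : tensor4) : tensor2 :=
  \matrix_(i < 3, j < 3) \sum_(k < 3) A k i k j.

Definition d2 (H : tensor4) : tensor2 := tr13 (ddot44 H H).

Definition ddot42 (H : tensor4) (a : tensor2) : tensor2 :=
  \matrix_(i < 3, j < 3) \sum_(k < 3) \sum_(l < 3) H i j k l * a k l.

Definition symgroup2 (t : tensor2) : set 'M[R]_3 :=
  [set g | SO3 g /\ act2 g t = t].

Definition symgroup_pair (H : tensor4) (t : tensor2) : set 'M[R]_3 :=
  [set g | SO3 g /\ act4 g H = H /\ act2 g t = t].

Definition symgroup_triple (a b c : tensor2) : set 'M[R]_3 :=
  [set g | SO3 g /\ act2 g a = a /\ act2 g b = b /\ act2 g c = c].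

Definition in_class (G K : set 'M[R]_3) : Prop :=
  exists2 g, SO3 g & G = [set g *m k *m invmx g | k in K].

Definition mx3 (a b c d e f p q r : R) : 'M[R]_3 :=
  \matrix_(i < 3, j < 3)
    nth 0 (nth [::] [:: [:: a; b; c]; [:: d; e; f]; [:: p; q; r]] i) j.

Definition rotz (theta : R) : 'M[R]_3 :=
  mx3 (cos theta) (- sin theta) 0 (sin theta) (cos theta) 0 0 0 1.
Definition rotx_pi : 'M[R]_3 := mx3 1 0 0 0 (-1) 0 0 0 (-1).

Definition O2 : set 'M[R]_3 :=
  [set rotz th | th in [set: R]] `|` [set rotz th *m rotx_pi | th in [set: R]].

Definition Dn (n : nat) : set 'M[R]_3 :=
  [set rotz (2 * pi * k%:R / n%:R) | k in [set k : nat | (k < n)%N]]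
  `|` [set rotz (2 * pi * k%:R / n%:R) *m rotx_pi | k in [set k : nat | (k < n)%N]].

Definition transversely_isotropic (G : set 'M[R]_3) : Prop := in_class G O2.
Definition tetragonal (G : set 'M[R]_3) : Prop := in_class G (Dn 4).
Definition trigonal (G : set 'M[R]_3) : Prop := in_class G (Dn 3).

End Defs.

From HB Require Import structures.
From mathcomp Require Import all_boot all_order all_algebra all_fingroup.
From mathcomp Require Import all_classical all_reals all_analysis.
From mathcomp Require Import ring lra zify.
Import Order.TTheory GRing.Theory Num.Theory.
Local Open Scope ring_scope.
Set Implicit Arguments. Unset Strict Implicit. Unset Printing Implicit Defensive.

(* Conjugating by a rotation, we may assume that the symmetry group of [t] is O(2)
   itself, so that [t = diag(a, a, b)] with [a <> b]; [d2] and [H : t] are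
   equivariant, so nothing else changes.  Each group of the three classes contains a
   rotation about the axis of order at least 3, and a symmetric tensor fixed by such
   a rotation is uniaxial, hence fixed by O(2): this gives the direct implication.
   Conversely, [H : t = (b - a) (H_ijzz)] being uniaxial puts the harmonic tensor [H]
   in a normal form with an isotropic part, a trigonal part [p + i q] and a
   tetragonal part [m + i s], on which the rotation by [th] acts by [exp (3 i th)]
   and [exp (4 i th)].  [d2 H] being uniaxial forces [(p + i q) (m + i s) = 0], and
   the three remaining cases have symmetry groups conjugate to O(2), D4 and D3. *)

Definition o0 : 'I_3 := @Ordinal 3 0 isT.
Definition o1 : 'I_3 := @Ordinal 3 1 isT.
Definition o2 : 'I_3 := @Ordinal 3 2 isT.

Lemma ord3_cases (i : 'I_3) : i = o0 \/ i = o1 \/ i = o2.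
Proof.
case: i => [[|[|[|n]]] Hn]; [left|right;left|right;right|by []]; exact: val_inj.
Qed.

Ltac case_ord3 i := case: (ord3_cases i) => [->|[->|->]].

Section Matrices3.
Variable R : realType.
Implicit Types (a b c d e f g h i : R) (A : 'M[R]_3).

Lemma sum_ord3 (F : 'I_3 -> R) : \sum_(a < 3) F a = F o0 + F o1 + F o2.
Proof.
rewrite !big_ord_recr big_ord0 /= add0r.
by congr (F _ + F _ + F _); apply: val_inj.
Qed.

Lemma mx3_eta A :
  A = mx3 (A o0 o0) (A o0 o1) (A o0 o2) (A o1 o0) (A o1 o1) (A o1 o2)
          (A o2 o0) (A o2 o1) (A o2 o2).
Proof. by apply/matrixP => i j; case_ord3 i; case_ord3 j; rewrite /mx3 mxE. Qed.

Lemma mulmx_mx3 a b c d e f g h i a' b' c' d' e' f' g' h' i' :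
  @mx3 R a b c d e f g h i *m mx3 a' b' c' d' e' f' g' h' i' =
  mx3 (a*a' + b*d' + c*g') (a*b' + b*e' + c*h') (a*c' + b*f' + c*i')
      (d*a' + e*d' + f*g') (d*b' + e*e' + f*h') (d*c' + e*f' + f*i')
      (g*a' + h*d' + i*g') (g*b' + h*e' + i*h') (g*c' + h*f' + i*i').
Proof.
apply/matrixP => x y; rewrite mxE sum_ord3.
by case_ord3 x; case_ord3 y; rewrite /mx3 !mxE.
Qed.

Lemma trmx_mx3 a b c d e f g h i :
  (@mx3 R a b c d e f g h i)^T = mx3 a d g b e h c f i.
Proof. by apply/matrixP => x y; case_ord3 x; case_ord3 y; rewrite /mx3 !mxE. Qed.

Lemma mx3_1 : (1%:M : 'M[R]_3) = mx3 1 0 0 0 1 0 0 0 1.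
Proof. by apply/matrixP => x y; case_ord3 x; case_ord3 y; rewrite /mx3 !mxE. Qed.

Lemma det_mx3 a b c d e f g h i :
  \det (@mx3 R a b c d e f g h i) = a*e*i - a*f*h - b*d*i + b*f*g + c*d*h - c*e*g.
Proof.
rewrite (expand_det_row _ o0) sum_ord3 /cofactor.
rewrite !(expand_det_row _ ord0) /cofactor !big_ord_recr !big_ord0 /= !det_mx11.
rewrite /mx3 !mxE /= !add0r; ring.
Qed.

Lemma mx3_sym_entries A : A^T = A ->
  [/\ A o1 o0 = A o0 o1, A o2 o0 = A o0 o2 & A o2 o1 = A o1 o2].
Proof.
move=> hA; split.
- by have := congr1 (fun M : 'M[R]_3 => M o0 o1) hA; rewrite mxE.
- by have := congr1 (fun M : 'M[R]_3 => M o0 o2) hA; rewrite mxE.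
- by have := congr1 (fun M : 'M[R]_3 => M o1 o2) hA; rewrite mxE.
Qed.

End Matrices3.

Section Rotations.
Variable R : realType.
Local Notation rx := (@rotx_pi R).
Implicit Types (g h k x : 'M[R]_3) (a b : R).

Lemma SO3_mulTmx g : SO3 g -> g^T *m g = 1%:M.
Proof. by case=> h _; apply: mulmx1C. Qed.

Lemma SO3_mulmxT g : SO3 g -> g *m g^T = 1%:M.
Proof. by case. Qed.

Lemma SO3_invmx g : SO3 g -> invmx g = g^T.
Proof.
move=> [h _]; have [u _] := mulmx1_unit h.
by rewrite -[invmx g]mulmx1 -h mulmxA mulVmx // mul1mx.
Qed.

Lemma SO3_1 : SO3 (1%:M : 'M[R]_3).
Proof. by split; rewrite ?trmx1 ?mulmx1 ?det1. Qed.

Lemma SO3_mul g h : SO3 g -> SO3 h -> SO3 (g *m h).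
Proof.
move=> [g1 g2] [h1 h2]; split; last by rewrite det_mulmx g2 h2 mulr1.
by rewrite trmx_mul mulmxA -(mulmxA g) h1 mulmx1 g1.
Qed.

Lemma SO3_tr g : SO3 g -> SO3 g^T.
Proof.
move=> hg; split; last by rewrite det_tr; case: hg.
by rewrite trmxK SO3_mulTmx.
Qed.

Lemma SO3_conj k x : SO3 k -> SO3 x -> SO3 (k *m x *m k^T).
Proof. by move=> hk hx; apply: SO3_mul; [apply: SO3_mul|apply: SO3_tr]. Qed.

Lemma SO3_conjT k x : SO3 k -> SO3 x -> SO3 (k^T *m x *m k).
Proof. by move=> hk hx; rewrite -{2}[k]trmxK; apply/SO3_conj/hx/SO3_tr. Qed.

Lemma conjTK k x : SO3 k -> k^T *m (k *m x *m k^T) *m k = x.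
Proof.
move=> hk; rewrite !mulmxA (SO3_mulTmx hk) mul1mx -mulmxA (SO3_mulTmx hk).
by rewrite mulmx1.
Qed.

Lemma conjKT k x : SO3 k -> k *m (k^T *m x *m k) *m k^T = x.
Proof.
move=> hk; rewrite !mulmxA (SO3_mulmxT hk) mul1mx -mulmxA (SO3_mulmxT hk).
by rewrite mulmx1.
Qed.

Lemma conj_mulmx k x y : SO3 k ->
  (k *m x *m k^T) *m (k *m y *m k^T) = k *m (x *m y) *m k^T.
Proof.
move=> hk; rewrite !mulmxA -(mulmxA _ k^T k) (SO3_mulTmx hk) mulmx1.
by rewrite -!mulmxA.
Qed.

Lemma rotzD a b : rotz a *m rotz b = rotz (a + b) :> 'M[R]_3.
Proof. by rewrite /rotz mulmx_mx3 cosD sinD; congr mx3; ring. Qed.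

Lemma trmx_rotz a : (rotz a)^T = rotz (- a) :> 'M[R]_3.
Proof. by rewrite /rotz trmx_mx3 cosN sinN; congr mx3; ring. Qed.

Lemma rotz0 : rotz 0 = 1%:M :> 'M[R]_3.
Proof. by rewrite /rotz mx3_1 cos0 sin0 oppr0. Qed.

Lemma trmx_rotx_pi : rx^T = rx.
Proof. by rewrite /rotx_pi trmx_mx3. Qed.

Lemma rotx_pi_invol : rx *m rx = 1%:M.
Proof. by rewrite /rotx_pi mulmx_mx3 mx3_1; congr mx3; ring. Qed.

Lemma rotx_pi_rotz a : rx *m rotz a = rotz (- a) *m rx.
Proof. by rewrite /rotx_pi /rotz !mulmx_mx3 cosN sinN; congr mx3; ring. Qed.

Lemma rotz_rotx_pi_invol a : (rotz a *m rx) *m (rotz a *m rx) = 1%:M.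
Proof.
rewrite mulmxA -(mulmxA (rotz a)) rotx_pi_rotz mulmxA rotzD subrr rotz0 mul1mx.
exact: rotx_pi_invol.
Qed.

Lemma rotz_conj a b : rotz a *m rotz b *m (rotz a)^T = rotz b :> 'M[R]_3.
Proof. by rewrite trmx_rotz !rotzD; congr rotz; ring. Qed.

Lemma rotz_rotx_pi_conj a b :
  rotz a *m (rotz b *m rx) *m (rotz a)^T = rotz (b + 2 * a) *m rx.
Proof.
rewrite trmx_rotz !mulmxA rotzD -mulmxA rotx_pi_rotz opprK mulmxA rotzD.
by congr (rotz _ *m _); ring.
Qed.

Lemma rotz_SO3 a : SO3 (rotz a).
Proof.
split; first by rewrite trmx_rotz rotzD subrr rotz0.
rewrite /rotz det_mx3; have := cos2Dsin2 a; lra.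
Qed.

Lemma rotx_pi_SO3 : SO3 rx.
Proof.
split; first by rewrite trmx_rotx_pi rotx_pi_invol.
rewrite /rotx_pi det_mx3; lra.
Qed.

Lemma eq_rotz a b : cos a = cos b -> sin a = sin b -> rotz a = rotz b :> 'M[R]_3.
Proof. by rewrite /rotz => -> ->. Qed.

Lemma rotz_inj a b : rotz a = rotz b :> 'M[R]_3 -> cos a = cos b /\ sin a = sin b.
Proof.
move=> E; have := congr1 (fun M : 'M[R]_3 => M o0 o0) E.
have := congr1 (fun M : 'M[R]_3 => M o1 o0) E.
by rewrite /rotz /mx3 !mxE /= => -> ->.
Qed.

Lemma rotz_sqr_neq1 a : sin a != 0 -> rotz a *m rotz a != 1%:M :> 'M[R]_3.
Proof.
move=> hs; apply/eqP => E.
have := congr1 (fun M : 'M[R]_3 => M o1 o0) E.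
rewrite /rotz mulmx_mx3 mx3_1 /mx3 !mxE /= => E1.
have := congr1 (fun M : 'M[R]_3 => M o0 o0) E.
rewrite /rotz mulmx_mx3 mx3_1 /mx3 !mxE /= => E2.
have h2 := cos2Dsin2 a.
move/eqP: hs; apply; nra.
Qed.

Lemma rotz_sqr_eq1 a : sin a = 0 -> rotz a *m rotz a = 1%:M :> 'M[R]_3.
Proof.
move=> hs; have h2 := cos2Dsin2 a; rewrite hs in h2.
rewrite /rotz mulmx_mx3 mx3_1 hs; congr mx3; nra.
Qed.

End Rotations.

Section TensorAction.
Variable R : realType.
Implicit Types (M g : 'M[R]_3) (t : 'M[R]_3) (X Y W H : tensor4 R).

Lemma tensor4_ext X Y : (forall i j k l, X i j k l = Y i j k l) -> X = Y.
Proof.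
move=> E; apply: funext => i; apply: funext => j; apply: funext => k.
by apply: funext => l; exact: E.
Qed.

Lemma act2E g t : SO3 g -> act2 g t = g *m t *m g^T.
Proof.
move=> hg; apply/matrixP => i j; rewrite /act2 SO3_invmx // !mxE.
rewrite exchange_big; apply: eq_bigr => b _; rewrite !mxE mulr_suml.
by apply: eq_bigr => a _; rewrite !mxE; ring.
Qed.

Definition slot1 M X : tensor4 R := fun i j k l => \sum_(a < 3) M i a * X a j k l.
Definition slot2 M X : tensor4 R := fun i j k l => \sum_(a < 3) M j a * X i a k l.
Definition slot3 M X : tensor4 R := fun i j k l => \sum_(a < 3) M k a * X i j a l.
Definition slot4 M X : tensor4 R := fun i j k l => \sum_(a < 3) M l a * X i j k a.

Definition rot4 M X := slot1 M (slot2 M (slot3 M (slot4 M X))).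

Lemma act4E g H : SO3 g -> act4 g H = rot4 g H.
Proof.
move=> hg; apply: tensor4_ext => i j k l.
rewrite /act4 /rot4 /slot1 /slot2 /slot3 /slot4 SO3_invmx //.
apply: eq_bigr => a _; rewrite !mulr_sumr; apply: eq_bigr => b _.
rewrite !mulr_sumr; apply: eq_bigr => c _; rewrite !mulr_sumr; apply: eq_bigr => d _.
by rewrite !mxE; ring.
Qed.

Ltac slot_comm := apply: tensor4_ext => i j k l; rewrite /slot1 /slot2 /slot3 /slot4;
  under eq_bigr do rewrite mulr_sumr; under [RHS]eq_bigr do rewrite mulr_sumr;
  rewrite exchange_big; apply: eq_bigr => a _; apply: eq_bigr => b _; ring.

Lemma slot21 A B X : slot2 A (slot1 B X) = slot1 B (slot2 A X). Proof. slot_comm. Qed.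
Lemma slot31 A B X : slot3 A (slot1 B X) = slot1 B (slot3 A X). Proof. slot_comm. Qed.
Lemma slot41 A B X : slot4 A (slot1 B X) = slot1 B (slot4 A X). Proof. slot_comm. Qed.
Lemma slot32 A B X : slot3 A (slot2 B X) = slot2 B (slot3 A X). Proof. slot_comm. Qed.
Lemma slot42 A B X : slot4 A (slot2 B X) = slot2 B (slot4 A X). Proof. slot_comm. Qed.
Lemma slot43 A B X : slot4 A (slot3 B X) = slot3 B (slot4 A X). Proof. slot_comm. Qed.

Ltac slot_comp := apply: tensor4_ext => i j k l; rewrite /slot1 /slot2 /slot3 /slot4;
  under eq_bigr do rewrite mulr_sumr; rewrite exchange_big; apply: eq_bigr => b _;
  rewrite mxE mulr_suml; apply: eq_bigr => a _; ring.

Lemma slot1M A B X : slot1 A (slot1 B X) = slot1 (A *m B) X. Proof. slot_comp. Qed.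
Lemma slot2M A B X : slot2 A (slot2 B X) = slot2 (A *m B) X. Proof. slot_comp. Qed.
Lemma slot3M A B X : slot3 A (slot3 B X) = slot3 (A *m B) X. Proof. slot_comp. Qed.
Lemma slot4M A B X : slot4 A (slot4 B X) = slot4 (A *m B) X. Proof. slot_comp. Qed.

Lemma sum_delta (F : 'I_3 -> R) a : \sum_(b < 3) (a == b)%:R * F b = F a.
Proof. by rewrite sum_ord3; case_ord3 a => /=; ring. Qed.

Ltac slot_id := apply: tensor4_ext => i j k l;
  rewrite /slot1 /slot2 /slot3 /slot4; under eq_bigr do rewrite mxE; exact: sum_delta.

Lemma slot1_id X : slot1 1%:M X = X. Proof. slot_id. Qed.
Lemma slot2_id X : slot2 1%:M X = X. Proof. slot_id. Qed.
Lemma slot3_id X : slot3 1%:M X = X. Proof. slot_id. Qed.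
Lemma slot4_id X : slot4 1%:M X = X. Proof. slot_id. Qed.

Lemma rot4M A B X : rot4 A (rot4 B X) = rot4 (A *m B) X.
Proof.
rewrite /rot4; do 10 rewrite ?slot21 ?slot31 ?slot41 ?slot32 ?slot42 ?slot43.
by rewrite slot1M slot2M slot3M slot4M.
Qed.

Lemma rot4_id X : rot4 1%:M X = X.
Proof. by rewrite /rot4 slot4_id slot3_id slot2_id slot1_id. Qed.

Lemma act2_id t : act2 1%:M t = t.
Proof. by rewrite act2E ?trmx1 ?mulmx1 ?mul1mx //; exact: SO3_1. Qed.

Lemma act2M g h t : SO3 g -> SO3 h -> act2 g (act2 h t) = act2 (g *m h) t.
Proof.
by move=> hg hh; rewrite !act2E ?trmx_mul ?mulmxA //; exact: SO3_mul.
Qed.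

Lemma act4_id H : act4 1%:M H = H.
Proof. by rewrite act4E ?rot4_id //; exact: SO3_1. Qed.

Lemma act4M g h H : SO3 g -> SO3 h -> act4 g (act4 h H) = act4 (g *m h) H.
Proof. by move=> hg hh; rewrite !act4E ?rot4M //; exact: SO3_mul. Qed.

Lemma orth_dot_col M a b : M^T *m M = 1%:M ->
  \sum_(i < 3) M i a * M i b = (a == b)%:R.
Proof.
move=> h; have := congr1 (fun A : 'M[R]_3 => A a b) h; rewrite !mxE => <-.
by apply: eq_bigr => i _; rewrite mxE.
Qed.

Lemma orth_contract2 M (F : 'I_3 -> 'I_3 -> R) : M^T *m M = 1%:M ->
  \sum_(i < 3) \sum_(a < 3) M i a * \sum_(b < 3) M i b * F a b = \sum_(a < 3) F a a.
Proof.
move=> h.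
transitivity (\sum_(a < 3) \sum_(b < 3) (\sum_(i < 3) M i a * M i b) * F a b).
  rewrite exchange_big; apply: eq_bigr => a _.
  under eq_bigr do rewrite mulr_sumr.
  rewrite exchange_big; apply: eq_bigr => b _; rewrite mulr_suml.
  by apply: eq_bigr => i _; ring.
apply: eq_bigr => a _; under eq_bigr do rewrite (orth_dot_col _ _ h).
exact: sum_delta.
Qed.

Lemma orth_contract M (f g : 'I_3 -> R) : M^T *m M = 1%:M ->
  \sum_(i < 3) (\sum_(a < 3) M i a * f a) * (\sum_(b < 3) M i b * g b)
  = \sum_(a < 3) f a * g a.
Proof.
move=> h; rewrite -(orth_contract2 (fun a b => f a * g b) h).
apply: eq_bigr => i _; rewrite mulr_suml; apply: eq_bigr => a _.
by rewrite -mulrA mulr_sumr; congr (_ * _); apply: eq_bigr => b _; ring.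
Qed.

Definition sym12 X := forall i j k l, X i j k l = X j i k l.
Definition sym23 X := forall i j k l, X i j k l = X i k j l.
Definition sym34 X := forall i j k l, X i j k l = X i j l k.
Definition sym4 X := [/\ sym12 X, sym23 X & sym34 X].

Ltac slot_pair_sym := let hW := fresh "hW" in
  move=> hW i j k l; rewrite /slot1 /slot2 /slot3 /slot4;
  under eq_bigr do rewrite mulr_sumr; under [RHS]eq_bigr do rewrite mulr_sumr;
  rewrite exchange_big; apply: eq_bigr => a _; apply: eq_bigr => b _; rewrite hW; ring.
Ltac slot_keep_sym := let hW := fresh "hW" in
  move=> hW i j k l; rewrite /slot1 /slot2 /slot3 /slot4;
  apply: eq_bigr => a _; congr (_ * _); exact: hW.

Lemma sym12_slot12 M W : sym12 W -> sym12 (slot1 M (slot2 M W)). Proof. slot_pair_sym. Qed.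
Lemma sym23_slot23 M W : sym23 W -> sym23 (slot2 M (slot3 M W)). Proof. slot_pair_sym. Qed.
Lemma sym34_slot34 M W : sym34 W -> sym34 (slot3 M (slot4 M W)). Proof. slot_pair_sym. Qed.
Lemma sym12_slot3 M W : sym12 W -> sym12 (slot3 M W). Proof. slot_keep_sym. Qed.
Lemma sym12_slot4 M W : sym12 W -> sym12 (slot4 M W). Proof. slot_keep_sym. Qed.
Lemma sym23_slot1 M W : sym23 W -> sym23 (slot1 M W). Proof. slot_keep_sym. Qed.
Lemma sym23_slot4 M W : sym23 W -> sym23 (slot4 M W). Proof. slot_keep_sym. Qed.
Lemma sym34_slot1 M W : sym34 W -> sym34 (slot1 M W). Proof. slot_keep_sym. Qed.
Lemma sym34_slot2 M W : sym34 W -> sym34 (slot2 M W). Proof. slot_keep_sym. Qed.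

Lemma rot4_sym4 M H : sym4 H -> sym4 (rot4 M H).
Proof.
case=> h12 h23 h34; split.
- exact/sym12_slot12/sym12_slot3/sym12_slot4.
- exact/sym23_slot1/sym23_slot23/sym23_slot4.
- exact/sym34_slot1/sym34_slot2/sym34_slot34.
Qed.

Lemma sym4_swap H : sym4 H -> forall i j p q, H i j p q = H p q i j.
Proof. by case=> h12 h23 h34 i j p q; rewrite h23 h12 h34 h23. Qed.

Lemma rot4_traceless M H : M^T *m M = 1%:M -> traceless4 H -> traceless4 (rot4 M H).
Proof.
move=> hM hH k l; rewrite /rot4 /slot1 /slot2.
rewrite (orth_contract2 (fun a b => slot3 M (slot4 M H) a b k l) hM) /slot3 /slot4.
rewrite exchange_big big1 // => c _; rewrite -mulr_sumr exchange_big /=.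
by rewrite big1 ?mulr0 // => d _; rewrite -mulr_sumr hH mulr0.
Qed.

Definition idx4 (i j k l : 'I_3) (m : 'I_4) : 'I_3 :=
  match nat_of_ord m with 0 => i | 1 => j | 2 => k | _ => l end.

Lemma totally_symmetric4_sym4 H : totally_symmetric4 H -> sym4 H.
Proof.
move=> hs; split=> i j k l;
  [ have := hs (tperm (inord 0) (inord 1)) (idx4 i j k l)
  | have := hs (tperm (inord 1) (inord 2)) (idx4 i j k l)
  | have := hs (tperm (inord 2) (inord 3)) (idx4 i j k l) ];
rewrite /= tpermL tpermR !tpermD; last 1 first;
try by apply/eqP => /(congr1 val); rewrite /= !inordK.
all: rewrite /idx4 /= ?inordK //= => E; first [exact E | exact (esym E)].
Qed.

End TensorAction.

Section Equivariance.
Variable R : realType.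
Implicit Types (M g : 'M[R]_3) (t : 'M[R]_3) (X Y H : tensor4 R).

Definition dd2 X Y (i j : 'I_3) : R :=
  \sum_(k < 3) \sum_(m < 3) \sum_(n < 3) X k i m n * Y m n k j.

Lemma d2E H i j : d2 H i j = dd2 H H i j.
Proof. by rewrite /d2 /tr13 mxE. Qed.

Lemma dd2_slot13 M X Y i j : M^T *m M = 1%:M ->
  dd2 (slot1 M X) (slot3 M Y) i j = dd2 X Y i j.
Proof.
move=> h; rewrite /dd2 /slot1 /slot3 exchange_big [RHS]exchange_big.
apply: eq_bigr => m _; rewrite exchange_big [RHS]exchange_big; apply: eq_bigr => n _.
exact: (orth_contract (fun a => X a i m n) (fun c => Y m n c j) h).
Qed.

Lemma dd2_slot31 M X Y i j : M^T *m M = 1%:M ->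
  dd2 (slot3 M X) (slot1 M Y) i j = dd2 X Y i j.
Proof.
move=> h; rewrite /dd2 /slot1 /slot3; apply: eq_bigr => k _.
rewrite exchange_big [RHS]exchange_big; apply: eq_bigr => n _.
exact: (orth_contract (fun a => X k i a n) (fun c => Y c n k j) h).
Qed.

Lemma dd2_slot42 M X Y i j : M^T *m M = 1%:M ->
  dd2 (slot4 M X) (slot2 M Y) i j = dd2 X Y i j.
Proof.
move=> h; rewrite /dd2 /slot2 /slot4; apply: eq_bigr => k _; apply: eq_bigr => m _.
exact: (orth_contract (fun a => X k i m a) (fun c => Y m c k j) h).
Qed.

Lemma dd2_slot2l M X Y i j : dd2 (slot2 M X) Y i j = \sum_(b < 3) M i b * dd2 X Y b j.
Proof. by rewrite /dd2 /slot2 !sum_ord3; ring. Qed.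

Lemma dd2_slot4r M X Y i j : dd2 X (slot4 M Y) i j = \sum_(b < 3) M j b * dd2 X Y i b.
Proof. by rewrite /dd2 /slot4 !sum_ord3; ring. Qed.

Lemma conj_mxE M t k l :
  (M *m t *m M^T) k l = \sum_(e < 3) M k e * \sum_(f < 3) M l f * t e f.
Proof. by rewrite mxE sum_ord3 !mxE !sum_ord3; ring. Qed.

(* The two factors of [H : H] are reordered so that the contracted slots face each other. *)
Lemma d2_rot4 M H : M^T *m M = 1%:M -> d2 (rot4 M H) = M *m d2 H *m M^T.
Proof.
move=> h; apply/matrixP => i j; rewrite d2E.
have e1 : rot4 M H = slot2 M (slot1 M (slot3 M (slot4 M H))) by rewrite /rot4 slot21.
have e2 : rot4 M H = slot4 M (slot3 M (slot1 M (slot2 M H))).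
  by rewrite /rot4; do 6 rewrite ?slot21 ?slot31 ?slot41 ?slot32 ?slot42 ?slot43.
rewrite {1}e1 e2.
rewrite dd2_slot2l; under eq_bigr do rewrite dd2_slot4r.
under eq_bigr do under eq_bigr do rewrite dd2_slot13 // dd2_slot31 // dd2_slot42 //.
rewrite conj_mxE; apply: eq_bigr => b _; congr (_ * _); apply: eq_bigr => d _.
by rewrite d2E.
Qed.

Lemma ddot42_rot4 M H t : M^T *m M = 1%:M ->
  ddot42 (rot4 M H) (M *m t *m M^T) = M *m ddot42 H t *m M^T.
Proof.
move=> h; apply/matrixP => i j; rewrite mxE conj_mxE.
have -> : \sum_(k < 3) \sum_(l < 3) rot4 M H i j k l * (M *m t *m M^T) k l =
  \sum_(a < 3) M i a * \sum_(b < 3) M j b *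
    (\sum_(k < 3) \sum_(l < 3) slot3 M (slot4 M H) a b k l * (M *m t *m M^T) k l).
  by rewrite /rot4 /slot1 /slot2 !sum_ord3; ring.
apply: eq_bigr => a _; congr (_ * _); apply: eq_bigr => b _; congr (_ * _).
under eq_bigr do under eq_bigr do rewrite conj_mxE.
rewrite exchange_big /slot3 /slot4 mxE.
under eq_bigr do rewrite (orth_contract (fun c => \sum_(d < 3) M _ d * H a b c d)
                                 (fun e => \sum_(f < 3) M _ f * t e f) h).
rewrite exchange_big; apply: eq_bigr => c _.
exact: (orth_contract (fun d => H a b c d) (fun f => t c f) h).
Qed.

Lemma d2_act4 g H : SO3 g -> d2 (act4 g H) = act2 g (d2 H).
Proof. by move=> hg; rewrite act4E // act2E // d2_rot4 //; exact: SO3_mulTmx. Qed.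

Lemma ddot42_act4 g H t : SO3 g ->
  ddot42 (act4 g H) (act2 g t) = act2 g (ddot42 H t).
Proof. by move=> hg; rewrite act4E // !act2E // ddot42_rot4 //; exact: SO3_mulTmx. Qed.

Lemma d2_sym H : sym4 H -> (d2 H)^T = d2 H.
Proof.
move=> hH; apply/matrixP => i j; rewrite mxE !d2E /dd2; apply: eq_bigr => k _.
apply: eq_bigr => m _; apply: eq_bigr => n _.
by rewrite (sym4_swap hH k j m n) (sym4_swap hH m n k i) mulrC.
Qed.

Lemma ddot42_sym H t : sym12 H -> (ddot42 H t)^T = ddot42 H t.
Proof.
move=> h12; apply/matrixP => i j; rewrite !mxE; apply: eq_bigr => k _.
by apply: eq_bigr => l _; rewrite h12.
Qed.

End Equivariance.

Section Conjugation.
Variable R : realType.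
Local Open Scope classical_set_scope.
Implicit Types (g h k x y : 'M[R]_3) (G K S : set 'M[R]_3).

Definition conjset k G : set 'M[R]_3 := [set k *m x *m k^T | x in G].

Lemma conjsetM k g G : conjset k (conjset g G) = conjset (k *m g) G.
Proof.
apply/seteqP; split => y /=.
  by case=> x [z hz <-] <-; exists z => //; rewrite trmx_mul !mulmxA.
case=> z hz <-; exists (g *m z *m g^T); first by exists z.
by rewrite trmx_mul !mulmxA.
Qed.

Lemma conjset1 G : conjset 1%:M G = G.
Proof.
apply/seteqP; split => y /=; first by case=> x hx <-; rewrite trmx1 mulmx1 mul1mx.
by move=> hy; exists y => //; rewrite trmx1 mulmx1 mul1mx.
Qed.

Lemma in_classE G K : in_class G K <-> exists2 g, SO3 g & G = conjset g K.
Proof. by split; case=> g hg E; exists g => //; rewrite E /conjset SO3_invmx. Qed.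

Lemma in_class_conjset k G K : SO3 k -> in_class (conjset k G) K <-> in_class G K.
Proof.
move=> hk; rewrite !in_classE; split; case=> g hg E.
  exists (k^T *m g); first exact/SO3_mul/hg/SO3_tr.
  by rewrite -conjsetM -E conjsetM SO3_mulTmx // conjset1.
by exists (k *m g); [apply: SO3_mul|rewrite -conjsetM E].
Qed.

Lemma conjset_stab k S (S' : set 'M[R]_3) : SO3 k -> S `<=` @SO3 R -> S' `<=` @SO3 R ->
  (forall y, SO3 y -> S' y <-> S (k^T *m y *m k)) -> S' = conjset k S.
Proof.
move=> hk hS hS' E; apply/seteqP; split => y.
  by move=> S'y; exists (k^T *m y *m k); [apply/E/S'y/hS'|exact: conjKT].
case=> x Sx <-; have hx := hS _ Sx.
by apply/(E _ (SO3_conj hk hx)); rewrite conjTK.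
Qed.

Section Stabilizer.
Variables (T : Type) (A : 'M[R]_3 -> T -> T).
Hypothesis A1 : forall u, A 1%:M u = u.
Hypothesis AM : forall g h u, SO3 g -> SO3 h -> A g (A h u) = A (g *m h) u.

Lemma act_fix_conj k y u : SO3 k -> SO3 y ->
  A y (A k u) = A k u <-> A (k^T *m y *m k) u = u.
Proof.
move=> hk hy; have hkT := SO3_tr hk; have hc := SO3_conjT hk hy.
split => E.
  rewrite -(AM _ (SO3_mul hkT hy) hk) -(AM _ hkT hy) E (AM _ hkT hk).
  by rewrite SO3_mulTmx // A1.
rewrite (AM _ hy hk) -{2}E (AM _ hk hc); congr (A _ u).
by rewrite !mulmxA SO3_mulmxT // mul1mx.
Qed.

End Stabilizer.

Lemma symgroup2_act2 k t : SO3 k -> symgroup2 (act2 k t) = conjset k (symgroup2 t).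
Proof.
move=> hk; apply: conjset_stab => // [y [] //|y [] //|y hy].
rewrite /symgroup2 /= (act_fix_conj (@act2_id R) (@act2M R)) //.
by split=> [[_ ->]|[_ ->]]; split=> //; exact: SO3_conjT.
Qed.

Lemma symgroup_pair_act k H t : SO3 k ->
  symgroup_pair (act4 k H) (act2 k t) = conjset k (symgroup_pair H t).
Proof.
move=> hk; apply: conjset_stab => // [y [] //|y [] //|y hy].
rewrite /symgroup_pair /= (act_fix_conj (@act4_id R) (@act4M R)) // (act_fix_conj (@act2_id R) (@act2M R)) //.
by split=> [[_ fy]|[_ fy]]; split=> //; exact: SO3_conjT.
Qed.

Lemma symgroup_triple_act2 k a b c : SO3 k ->
  symgroup_triple (act2 k a) (act2 k b) (act2 k c) = conjset k (symgroup_triple a b c).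
Proof.
move=> hk; apply: conjset_stab => // [y [] //|y [] //|y hy].
rewrite /symgroup_triple /= !(act_fix_conj (@act2_id R) (@act2M R)) //.
by split=> [[_ fy]|[_ fy]]; split=> //; exact: SO3_conjT.
Qed.

End Conjugation.

Section Uniaxial.
Variable R : realType.
Local Open Scope classical_set_scope.
Local Notation rx := (@rotx_pi R).
Implicit Types (g h k : 'M[R]_3) (S t : 'M[R]_3) (a b phi : R).

Definition uniaxial a b : 'M[R]_3 := mx3 a 0 0 0 a 0 0 0 b.

Lemma sin_pihalf_neq0 : sin (pi / 2 : R) != 0.
Proof. by rewrite sin_pihalf oner_eq0. Qed.

Lemma sym_rotz_fix_uniaxial S phi : S^T = S -> act2 (rotz phi) S = S -> sin phi != 0 ->
  S = uniaxial (S o0 o0) (S o2 o2).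
Proof.
move=> hS hf hs; have [s10 s20 s21] := mx3_sym_entries hS.
rewrite act2E in hf; last exact: rotz_SO3.
have E : rotz phi *m S = S *m rotz phi.
  by rewrite -{2}hf -(mulmxA _ _ (rotz phi)) (SO3_mulTmx (rotz_SO3 phi)) mulmx1.
rewrite (mx3_eta S) /rotz !mulmx_mx3 in E.
move: (congr1 (fun M : 'M[R]_3 => M o0 o0) E) (congr1 (fun M : 'M[R]_3 => M o0 o1) E)
      (congr1 (fun M : 'M[R]_3 => M o0 o2) E) (congr1 (fun M : 'M[R]_3 => M o1 o2) E).
rewrite /mx3 !mxE /= s10 s20 s21 => e00 e01 e02 e12.
have h01 : S o0 o1 = 0 by apply: (mulfI hs); rewrite mulr0; nra.
have h11 : S o1 o1 = S o0 o0 by apply: (mulfI hs); move: e01; rewrite h01; nra.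
have hp : (1 - cos phi) ^+ 2 + sin phi ^+ 2 != 0.
  rewrite lt0r_neq0 // ltr_pwDr ?sqr_ge0 //.
  by rewrite exprn_even_gt0 //= hs orbT.
have E1 : (1 - cos phi) * S o0 o2 + sin phi * S o1 o2 = 0 by nra.
have E2 : sin phi * S o0 o2 - (1 - cos phi) * S o1 o2 = 0 by nra.
have h02 : S o0 o2 = 0.
  apply: (mulfI hp); rewrite mulr0.
  transitivity ((1 - cos phi) * ((1 - cos phi) * S o0 o2 + sin phi * S o1 o2)
     + sin phi * (sin phi * S o0 o2 - (1 - cos phi) * S o1 o2)); first by ring.
  by rewrite E1 E2 !mulr0 addr0.
have h12 : S o1 o2 = 0.
  apply: (mulfI hp); rewrite mulr0.
  transitivity (sin phi * ((1 - cos phi) * S o0 o2 + sin phi * S o1 o2)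
     - (1 - cos phi) * (sin phi * S o0 o2 - (1 - cos phi) * S o1 o2)); first by ring.
  by rewrite E1 E2 !mulr0 subr0.
by rewrite {1}(mx3_eta S) s10 s20 s21 h01 h02 h12 h11.
Qed.

Lemma O2_fix_uniaxial g a b : O2 g -> act2 g (uniaxial a b) = uniaxial a b.
Proof.
have hx := rotx_pi_SO3 R.
have rotz_fix th : act2 (rotz th) (uniaxial a b) = uniaxial a b.
  have hz := rotz_SO3 th.
  rewrite act2E // trmx_rotz /rotz !mulmx_mx3 cosN sinN.
  congr mx3; first [ring | transitivity (a * (cos th ^+ 2 + sin th ^+ 2))];
    by [ring | rewrite cos2Dsin2 mulr1].
case=> [[th _ <-]|[th _ <-]]; first exact: rotz_fix.
have hz := rotz_SO3 th.
rewrite -act2M // [act2 rx _]act2E // trmx_rotx_pi -[RHS](rotz_fix th).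
by congr act2; rewrite /rotx_pi /uniaxial !mulmx_mx3; congr mx3; ring.
Qed.

Lemma conj_sub_O2_has_rotz (P K : set 'M[R]_3) h k :
  P `<=` @O2 R -> SO3 h -> P = conjset h K -> K k -> k *m k != 1%:M ->
  exists phi, P (rotz phi) /\ sin phi != 0.
Proof.
move=> PO hh PE Kk kk.
have Px : P (h *m k *m h^T) by rewrite PE; exists k.
have xx : (h *m k *m h^T) *m (h *m k *m h^T) != 1%:M.
  apply: contra kk => /eqP E; apply/eqP.
  by rewrite conj_mulmx // in E; rewrite -(conjTK (k *m k) hh) E mulmx1 SO3_mulTmx.
case: (PO _ Px) => [[a _ Ea]|[a _ Ea]]; last by move: xx; rewrite -Ea rotz_rotx_pi_invol eqxx.
exists a; split; first by rewrite Ea.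
by apply/eqP => hs; move: xx; rewrite -Ea rotz_sqr_eq1 ?eqxx.
Qed.

(* The quarter turn about the x-axis: it fixes [uniaxial a a] but is not in O(2). *)
Definition rotx_pihalf : 'M[R]_3 := mx3 1 0 0 0 0 (-1) 0 1 0.

Lemma rotx_pihalf_SO3 : SO3 rotx_pihalf.
Proof.
split; first by rewrite /rotx_pihalf trmx_mx3 mulmx_mx3 mx3_1; congr mx3; ring.
by rewrite /rotx_pihalf det_mx3; ring.
Qed.

Lemma sym2_O2_uniaxial t : t^T = t -> symgroup2 t = @O2 R ->
  exists a b, t = uniaxial a b /\ b != a.
Proof.
move=> hs hO.
have ht : act2 (rotz (pi / 2)) t = t.
  have : symgroup2 t (rotz (pi / 2)) by rewrite hO; left; exists (pi / 2).
  by case.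
have E := sym_rotz_fix_uniaxial hs ht sin_pihalf_neq0.
exists (t o0 o0), (t o2 o2); split => //.
apply/eqP => hab.
have : symgroup2 t rotx_pihalf.
  have hq := rotx_pihalf_SO3; split => //.
  rewrite act2E // E hab /rotx_pihalf /uniaxial trmx_mx3 !mulmx_mx3.
  by congr mx3; ring.
rewrite hO => -[[th _ Eg]|[th _ Eg]]; have := congr1 (fun M : 'M[R]_3 => M o2 o2) Eg;
  rewrite /rotx_pihalf /rotz /rotx_pi ?mulmx_mx3 /mx3 !mxE /= => h; clear -h; lra.
Qed.

End Uniaxial.

Section Trigonometry.
Variable R : realType.
Implicit Types (x y c s u v X Y : R).

Lemma sqr_add_eq0 x y : x ^+ 2 + y ^+ 2 = 0 -> x = 0 /\ y = 0.
Proof.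
move=> h; have /andP[hx hy] : (x ^+ 2 == 0) && (y ^+ 2 == 0).
  by rewrite -paddr_eq0 ?sqr_ge0 // h.
by split; apply/eqP; rewrite -sqrf_eq0.
Qed.

Lemma rot_fix_solve u v X Y : u * X - v * Y = u -> u * Y + v * X = v ->
  u ^+ 2 + v ^+ 2 != 0 -> X = 1 /\ Y = 0.
Proof.
move=> e1 e2 hn.
have : ((X - 1) ^+ 2 + Y ^+ 2) * (u ^+ 2 + v ^+ 2) = 0.
  transitivity ((u * X - v * Y - u) ^+ 2 + (u * Y + v * X - v) ^+ 2); first by ring.
  by rewrite e1 e2 !subrr expr0n /= addr0.
move/eqP; rewrite mulf_eq0 (negbTE hn) orbF => /eqP /sqr_add_eq0 [h1 h2].
by split => //; apply/eqP; rewrite -subr_eq0 h1.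
Qed.

Definition cos3_poly c s := c ^+ 3 - 3 * c * s ^+ 2.
Definition sin3_poly c s := 3 * c ^+ 2 * s - s ^+ 3.
Definition cos4_poly c s := c ^+ 4 - 6 * c ^+ 2 * s ^+ 2 + s ^+ 4.
Definition sin4_poly c s := 4 * c ^+ 3 * s - 4 * c * s ^+ 3.

Lemma cos3E x : cos (3 * x) = cos3_poly (cos x) (sin x).
Proof. have -> : 3 * x = x + x + x by ring. by rewrite ?(cosD, sinD) /cos3_poly; ring. Qed.
Lemma sin3E x : sin (3 * x) = sin3_poly (cos x) (sin x).
Proof. have -> : 3 * x = x + x + x by ring. by rewrite ?(cosD, sinD) /sin3_poly; ring. Qed.
Lemma cos4E x : cos (4 * x) = cos4_poly (cos x) (sin x).
Proof. have -> : 4 * x = x + x + x + x by ring. by rewrite ?(cosD, sinD) /cos4_poly; ring. Qed.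
Lemma sin4E x : sin (4 * x) = sin4_poly (cos x) (sin x).
Proof. have -> : 4 * x = x + x + x + x by ring. by rewrite ?(cosD, sinD) /sin4_poly; ring. Qed.

Lemma unit_circle_angle x y : x ^+ 2 + y ^+ 2 = 1 -> exists a, cos a = x /\ sin a = y.
Proof.
move=> h.
have hx : x \in `[(-1), 1] by rewrite in_itv /=; apply/andP; split; nra.
have sa : sin (acos x) = `|y|.
  by rewrite sin_acos -?in_itv // -sqrtr_sqr; congr Num.sqrt; lra.
case: (lerP 0 y) => hy.
  by exists (acos x); rewrite acosK // sa ger0_norm.
by exists (- acos x); rewrite cosN sinN acosK // sa ltr0_norm // opprK.
Qed.

Definition Dn_angle (n k : nat) : R := 2 * pi * k%:R / n%:R.

Lemma cos_sin_2pi_natmul k : cos (2 * pi * k%:R : R) = 1 /\ sin (2 * pi * k%:R : R) = 0.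
Proof.
elim: k => [|k [IHc IHs]]; first by rewrite mulr0 cos0 sin0.
have -> : 2 * pi * k.+1%:R = 2 * pi * k%:R + pi *+ 2 :> R by rewrite -natr1; ring.
by rewrite cosD2pi sinD2pi.
Qed.

Lemma Dn_angle_mul n k : (0 < n)%N -> n%:R * Dn_angle n k = 2 * pi * k%:R.
Proof. by move=> n0; rewrite /Dn_angle mulrC divfK // pnatr_eq0 -lt0n. Qed.

Lemma Dn_angle3_poly k : cos3_poly (cos (Dn_angle 3 k)) (sin (Dn_angle 3 k)) = 1 /\
                         sin3_poly (cos (Dn_angle 3 k)) (sin (Dn_angle 3 k)) = 0.
Proof. by rewrite -cos3E -sin3E Dn_angle_mul //; exact: cos_sin_2pi_natmul. Qed.

Lemma Dn_angle4_poly k : cos4_poly (cos (Dn_angle 4 k)) (sin (Dn_angle 4 k)) = 1 /\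
                         sin4_poly (cos (Dn_angle 4 k)) (sin (Dn_angle 4 k)) = 0.
Proof. by rewrite -cos4E -sin4E Dn_angle_mul //; exact: cos_sin_2pi_natmul. Qed.

Lemma cos3_poly_eq1 c s : c ^+ 2 + s ^+ 2 = 1 -> cos3_poly c s = 1 ->
  c = 1 \/ c = - 1 / 2.
Proof.
move=> h hC; have : (c - 1) * (2 * c + 1) ^+ 2 = 0.
  transitivity (cos3_poly c s - 1 + 3 * c * (c ^+ 2 + s ^+ 2 - 1)).
    by rewrite /cos3_poly; ring.
  by rewrite h hC !subrr mulr0 addr0.
by move/eqP; rewrite mulf_eq0 sqrf_eq0 => /orP [] /eqP hc; [left|right]; lra.
Qed.

Lemma sin_Dn_angle31_gt0 : 0 < sin (Dn_angle 3 1).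
Proof.
by apply: sin_gt0_pi; rewrite /Dn_angle; have hp := @pi_gt0 R; apply/andP; split; lra.
Qed.

Lemma cos_Dn_angle31 : cos (Dn_angle 3 1) = - 1 / 2.
Proof.
have [hc1|//] := cos3_poly_eq1 (cos2Dsin2 _) (Dn_angle3_poly 1).1.
have := cos2Dsin2 (Dn_angle 3 1); have := sin_Dn_angle31_gt0; rewrite hc1; nra.
Qed.

Lemma Dn_angle32 : Dn_angle 3 2 = Dn_angle 3 1 + Dn_angle 3 1.
Proof. by rewrite /Dn_angle; field. Qed.

Lemma cos3_poly_Dn_angle c s : c ^+ 2 + s ^+ 2 = 1 -> cos3_poly c s = 1 ->
  exists2 k, (k < 3)%N & cos (Dn_angle 3 k) = c /\ sin (Dn_angle 3 k) = s.
Proof.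
move=> h hC; set a := Dn_angle 3 1.
have hs2 : sin a ^+ 2 = 3 / 4 by have := cos2Dsin2 a; rewrite cos_Dn_angle31; lra.
case: (cos3_poly_eq1 h hC) => hc.
  exists 0%N => //; rewrite /Dn_angle mulr0 mul0r cos0 sin0 hc; split => //.
  by rewrite hc expr1n in h; apply/esym/eqP; rewrite -sqrf_eq0; apply/eqP; lra.
have : (s - sin a) * (s + sin a) = 0.
  rewrite hc in h; transitivity (s ^+ 2 - sin a ^+ 2); [ring | lra].
move/eqP; rewrite mulf_eq0 => /orP [] /eqP hs.
  by exists 1%N => //; rewrite cos_Dn_angle31 hc; split => //; lra.
exists 2%N => //; rewrite Dn_angle32 cosD sinD cos_Dn_angle31 hc.
by split; lra.
Qed.

Lemma cos4_poly_Dn_angle c s : c ^+ 2 + s ^+ 2 = 1 -> cos4_poly c s = 1 ->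
  exists2 k, (k < 4)%N & cos (Dn_angle 4 k) = c /\ sin (Dn_angle 4 k) = s.
Proof.
move=> h hC.
have : 8 * (c * s) ^+ 2 = 0.
  transitivity ((c ^+ 2 + s ^+ 2) ^+ 2 - cos4_poly c s); first by rewrite /cos4_poly; ring.
  by rewrite h hC expr1n subrr.
have a1 : Dn_angle 4 1 = pi / 2 by rewrite /Dn_angle; field.
have a2 : Dn_angle 4 2 = pi by rewrite /Dn_angle; field.
have a3 : Dn_angle 4 3 = pi + pi / 2 by rewrite /Dn_angle; field.
move/eqP; rewrite mulf_eq0 pnatr_eq0 /= sqrf_eq0 mulf_eq0 => /orP [] /eqP hz;
  rewrite hz expr0n /= ?add0r ?addr0 in h.
- have : (s - 1) * (s + 1) = 0 by transitivity (s ^+ 2 - 1); [ring | rewrite h subrr].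
  move/eqP; rewrite mulf_eq0 => /orP [] /eqP hs.
  + by exists 1%N => //; rewrite a1 cos_pihalf sin_pihalf hz; split => //; lra.
  + exists 3%N => //; rewrite a3 cosDpihalf sinDpihalf sinpi cospi oppr0 hz.
    by split => //; lra.
- have : (c - 1) * (c + 1) = 0 by transitivity (c ^+ 2 - 1); [ring | rewrite h subrr].
  move/eqP; rewrite mulf_eq0 => /orP [] /eqP hc.
  + exists 0%N => //; rewrite /Dn_angle mulr0 mul0r cos0 sin0 hz.
    by split => //; lra.
  + by exists 2%N => //; rewrite a2 cospi sinpi hz; split => //; lra.
Qed.

End Trigonometry.

Section NormalForm.
Variable R : realType.
Local Notation rx := (@rotx_pi R).
Implicit Types (A B K : tensor4 R) (N e p q m s c : R).

Definition count_idx (v : nat) (i j k l : 'I_3) : nat :=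
  ((i == v :> nat) + (j == v :> nat) + (k == v :> nat) + (l == v :> nat))%N.

(* A component of the tensors below depends only on the numbers [n0], [n1] of its
   indices equal to [x] and to [y].  [e] carries the isotropic part, [(p, q)] the
   trigonal part and [(m, s)] the tetragonal part; [N] is the squared modulus of
   [c + i s] when a tensor with [N = 1] is pushed forward by the similarity
   [mx3 c (- s) 0 s c 0 0 0 1]. *)
Definition hform_val N e p q m s (n0 n1 : nat) : R :=
  match n0, n1 with
  | 0, 0 => 8 * e
  | 2, 0 | 0, 2 => -4 * e * N
  | 4, 0 | 0, 4 => 3 * e * N ^+ 2 + m
  | 2, 2 => e * N ^+ 2 - m
  | 3, 0 => p | 1, 2 => - p
  | 0, 3 => q | 2, 1 => - q
  | 3, 1 => s | 1, 3 => - s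
  | _, _ => 0 end.

Definition hformN N e p q m s : tensor4 R :=
  fun i j k l => hform_val N e p q m s (count_idx 0 i j k l) (count_idx 1 i j k l).

Definition hform := hformN 1.

Lemma hformN_sym4 N e p q m s : sym4 (hformN N e p q m s).
Proof. by split=> i j k l; rewrite /hformN /count_idx; congr hform_val; lia. Qed.

Lemma sym4_ext A B : sym4 A -> sym4 B ->
  (forall i j k l : 'I_3, (i <= j <= k)%N -> (k <= l)%N -> A i j k l = B i j k l) -> A = B.
Proof.
move=> [a12 a23 a34] [b12 b23 b34] hE; apply: tensor4_ext => i j k l.
case_ord3 i; case_ord3 j; case_ord3 k; case_ord3 l;
repeat match goal with
 | |- ?A o1 o0 ?k ?l = _ => rewrite (a12 o1 o0 k l) (b12 o1 o0 k l)
 | |- ?A o2 o0 ?k ?l = _ => rewrite (a12 o2 o0 k l) (b12 o2 o0 k l)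
 | |- ?A o2 o1 ?k ?l = _ => rewrite (a12 o2 o1 k l) (b12 o2 o1 k l)
 | |- ?A ?i o1 o0 ?l = _ => rewrite (a23 i o1 o0 l) (b23 i o1 o0 l)
 | |- ?A ?i o2 o0 ?l = _ => rewrite (a23 i o2 o0 l) (b23 i o2 o0 l)
 | |- ?A ?i o2 o1 ?l = _ => rewrite (a23 i o2 o1 l) (b23 i o2 o1 l)
 | |- ?A ?i ?j o1 o0 = _ => rewrite (a34 i j o1 o0) (b34 i j o1 o0)
 | |- ?A ?i ?j o2 o0 = _ => rewrite (a34 i j o2 o0) (b34 i j o2 o0)
 | |- ?A ?i ?j o2 o1 = _ => rewrite (a34 i j o2 o1) (b34 i j o2 o1)
 end; by apply: hE.
Qed.

Lemma rot4_hform c s e p q m s0 :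
  rot4 (mx3 c (- s) 0 s c 0 0 0 1) (hform e p q m s0) =
  hformN (c ^+ 2 + s ^+ 2) e
    (p * cos3_poly c s + q * sin3_poly c s) (q * cos3_poly c s - p * sin3_poly c s)
    (m * cos4_poly c s - s0 * sin4_poly c s) (m * sin4_poly c s + s0 * cos4_poly c s).
Proof.
apply: sym4_ext; [exact/rot4_sym4/hformN_sym4 | exact: hformN_sym4 |].
move=> i j k l; case_ord3 i; case_ord3 j; case_ord3 k; case_ord3 l => //= _ _;
rewrite /rot4 /slot1 /slot2 /slot3 /slot4 !sum_ord3 /mx3 !mxE /= /hform /hformN
  /hform_val /count_idx /= /cos3_poly /sin3_poly /cos4_poly /sin4_poly;
ring.
Qed.

Lemma rot4_rotx_pi_hform e p q m s : rot4 rx (hform e p q m s) = hform e (- p) q m (- s).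
Proof.
apply: sym4_ext; [exact/rot4_sym4/hformN_sym4 | exact: hformN_sym4 |].
move=> i j k l; case_ord3 i; case_ord3 j; case_ord3 k; case_ord3 l => //= _ _;
rewrite /rot4 /slot1 /slot2 /slot3 /slot4 !sum_ord3 /rotx_pi /mx3 !mxE /= /hform
  /hformN /hform_val /count_idx /=;
ring.
Qed.

Lemma act4_rotz_hform th e p q m s :
  act4 (rotz th) (hform e p q m s) =
  hform e (p * cos3_poly (cos th) (sin th) + q * sin3_poly (cos th) (sin th))
          (q * cos3_poly (cos th) (sin th) - p * sin3_poly (cos th) (sin th))
          (m * cos4_poly (cos th) (sin th) - s * sin4_poly (cos th) (sin th))
          (m * sin4_poly (cos th) (sin th) + s * cos4_poly (cos th) (sin th)).
Proof. by rewrite act4E; [rewrite /rotz rot4_hform cos2Dsin2 | exact: rotz_SO3]. Qed.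

Lemma act4_rotz_rotx_pi_hform th e p q m s :
  act4 (rotz th *m rx) (hform e p q m s) =
  hform e (- p * cos3_poly (cos th) (sin th) + q * sin3_poly (cos th) (sin th))
          (q * cos3_poly (cos th) (sin th) + p * sin3_poly (cos th) (sin th))
          (m * cos4_poly (cos th) (sin th) + s * sin4_poly (cos th) (sin th))
          (m * sin4_poly (cos th) (sin th) - s * cos4_poly (cos th) (sin th)).
Proof.
have hx := rotx_pi_SO3 R; have hz := rotz_SO3 th.
rewrite -act4M // [act4 rx _]act4E // rot4_rotx_pi_hform act4_rotz_hform.
by congr hform; ring.
Qed.

Lemma hform_inj e p q m s p' q' m' s' :
  hform e p q m s = hform e p' q' m' s' -> [/\ p = p', q = q', m = m' & s = s'].
Proof.
move=> E.
have := congr1 (fun K : tensor4 R => K o0 o0 o0 o2) E.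
have := congr1 (fun K : tensor4 R => K o1 o1 o1 o2) E.
have := congr1 (fun K : tensor4 R => K o0 o0 o0 o0) E.
have := congr1 (fun K : tensor4 R => K o0 o0 o0 o1) E.
rewrite /hform /hformN /hform_val /count_idx /= => e1 e2 e3 e4; split => //; lra.
Qed.

Lemma d2_hform02 e p q m s : d2 (hform e p q m s) o0 o2 = 4 * (p * m - q * s).
Proof. by rewrite d2E /dd2 !sum_ord3 /hform /hformN /hform_val /count_idx /=; ring. Qed.

Lemma d2_hform12 e p q m s : d2 (hform e p q m s) o1 o2 = 4 * (p * s + q * m).
Proof. by rewrite d2E /dd2 !sum_ord3 /hform /hformN /hform_val /count_idx /=; ring. Qed.

(* Tracelessness leaves free exactly the five parameters of [hform] once the
   [(i, j, z, z)] block is uniaxial. *)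
Lemma hform_normal K : sym4 K -> traceless4 K ->
  K o0 o2 o2 o2 = 0 -> K o1 o2 o2 o2 = 0 -> K o0 o1 o2 o2 = 0 ->
  K o0 o0 o2 o2 = K o1 o1 o2 o2 ->
  K = hform (K o2 o2 o2 o2 / 8) (K o0 o0 o0 o2) (K o1 o1 o1 o2)
            (K o0 o0 o0 o0 - 3 * (K o2 o2 o2 o2 / 8)) (K o0 o0 o0 o1).
Proof.
move=> hK hTL z1 z2 z3 z4; have [h12 h23 h34] := hK; have ps := sym4_swap hK.
have t00 := hTL o0 o0; rewrite sum_ord3 (ps o1 o1 o0 o0) (ps o2 o2 o0 o0) in t00.
have t11 := hTL o1 o1; rewrite sum_ord3 (ps o2 o2 o1 o1) in t11.
have t22 := hTL o2 o2; rewrite sum_ord3 in t22.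
have t01 := hTL o0 o1; rewrite sum_ord3 (ps o1 o1 o0 o1) (ps o2 o2 o0 o1) in t01.
have t02 := hTL o0 o2; rewrite sum_ord3 (ps o1 o1 o0 o2) (ps o2 o2 o0 o2) in t02.
rewrite (h23 o0 o2 o1 o1) (h34 o0 o1 o2 o1) in t02.
have t12 := hTL o1 o2; rewrite sum_ord3 (ps o2 o2 o1 o2) in t12.
apply: sym4_ext => //; first exact: hformN_sym4.
move=> i j k l; case_ord3 i; case_ord3 j; case_ord3 k; case_ord3 l => //= _ _;
rewrite /hform /hformN /hform_val /count_idx /=; lra.
Qed.

End NormalForm.

Section PairClasses.
Variable R : realType.
Local Open Scope classical_set_scope.
Local Notation rx := (@rotx_pi R).
Implicit Types (g x y : 'M[R]_3) (t : 'M[R]_3) (K : tensor4 R) (P : set 'M[R]_3).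

Lemma symgroup_pair_O2 K t g : symgroup2 t = @O2 R ->
  symgroup_pair K t g <-> O2 g /\ act4 g K = K.
Proof.
by move=> <-; split=> [[hs [h4 h2]]|[[hs h2] h4]]; split=> //; split.
Qed.

Lemma symgroup_pair_mul K t x y : symgroup_pair K t x -> symgroup_pair K t y ->
  symgroup_pair K t (x *m y).
Proof.
case=> sx [fx1 fx2] [sy [fy1 fy2]]; split; first exact: SO3_mul.
by rewrite -act4M // -act2M // fy1 fy2 fx1 fx2.
Qed.

Lemma symgroup_pair_tr K t x : symgroup_pair K t x -> symgroup_pair K t x^T.
Proof.
case=> sx [fx1 fx2]; have sxT := SO3_tr sx; split => //; split.
  by rewrite -{1}fx1 act4M // SO3_mulTmx // act4_id.
by rewrite -{1}fx2 act2M // SO3_mulTmx // act2_id.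
Qed.

Lemma sub_O2_conj_Dn P n psi : P `<=` @O2 R ->
  (forall x y, P x -> P y -> P (x *m y)) -> (forall x, P x -> P x^T) ->
  (forall th, P (rotz th) <-> exists2 k, (k < n)%N & rotz th = rotz (Dn_angle R n k)) ->
  P (rotz (2 * psi) *m rx) ->
  P = conjset (rotz psi) (Dn n).
Proof.
move=> PO Pm Pt Prot Pf; apply/seteqP; split => g.
  move=> Pg; case: (PO g Pg) => [[th _ Eg]|[th _ Eg]].
    have [k hk Ek] : exists2 k, (k < n)%N & rotz th = rotz (Dn_angle R n k).
      by apply/Prot; rewrite Eg.
    by exists (rotz (Dn_angle R n k)); [left; exists k | rewrite rotz_conj -Ek].
  have P1 : P (rotz (th - 2 * psi)).
    have := Pm _ _ Pg (Pt _ Pf); rewrite -Eg trmx_mul trmx_rotx_pi trmx_rotz.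
    by rewrite -(mulmxA (rotz th)) (mulmxA rx) rotx_pi_invol mul1mx rotzD.
  have [k hk Ek] := (Prot _).1 P1.
  exists (rotz (Dn_angle R n k) *m rx); first by right; exists k.
  rewrite rotz_rotx_pi_conj -Eg -rotzD -Ek rotzD; congr (rotz _ *m _); ring.
case=> y [[k hk <-]|[k hk <-]] <-.
  by rewrite rotz_conj; apply/Prot; exists k.
rewrite rotz_rotx_pi_conj -rotzD -mulmxA; apply: Pm => //.
by apply/Prot; exists k.
Qed.

Lemma hform_pair_transversely_isotropic e t : symgroup2 t = @O2 R ->
  transversely_isotropic (symgroup_pair (hform e 0 0 0 0) t).
Proof.
move=> hO; apply/in_classE; exists 1%:M; first exact: SO3_1.
rewrite conjset1; apply/seteqP; split => g; first by case/(symgroup_pair_O2 _ _ hO).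
move=> Og; apply/(symgroup_pair_O2 _ _ hO); split => //.
case: Og => [[th _ <-]|[th _ <-]].
  by rewrite act4_rotz_hform; congr hform; ring.
by rewrite act4_rotz_rotx_pi_hform; congr hform; ring.
Qed.

Lemma hform_pair_tetragonal e m s t : symgroup2 t = @O2 R -> m ^+ 2 + s ^+ 2 != 0 ->
  tetragonal (symgroup_pair (hform e 0 0 m s) t).
Proof.
move=> hO hr.
have [phi [cphi sphi]] : exists phi, cos phi = (m ^+ 2 - s ^+ 2) / (m ^+ 2 + s ^+ 2)
                                  /\ sin phi = 2 * m * s / (m ^+ 2 + s ^+ 2).
  by apply: unit_circle_angle; field.
apply/in_classE; exists (rotz (phi / 8)); first exact: rotz_SO3.
apply: sub_O2_conj_Dn.
- by move=> g /(symgroup_pair_O2 _ _ hO) [].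
- exact: symgroup_pair_mul.
- exact: symgroup_pair_tr.
- move=> th; rewrite (symgroup_pair_O2 _ _ hO) act4_rotz_hform; split.
    case=> _ /hform_inj [_ _ e3 e4].
    have [hC _] := rot_fix_solve e3 e4 hr.
    have [k hk [ck sk]] := cos4_poly_Dn_angle (cos2Dsin2 th) hC.
    by exists k => //; apply: eq_rotz.
  case=> k hk /rotz_inj [ck sk]; split; first by left; exists th.
  have [hC hS] := Dn_angle4_poly R k.
  by rewrite ck sk hC hS; congr hform; ring.
- rewrite (symgroup_pair_O2 _ _ hO) act4_rotz_rotx_pi_hform.
  split; first by right; exists (2 * (phi / 8)).
  rewrite -cos4E -sin4E (_ : 4 * (2 * (phi / 8)) = phi); last by field.
  by rewrite cphi sphi; congr hform; field.
Qed.

Lemma hform_pair_trigonal e p q t : symgroup2 t = @O2 R -> p ^+ 2 + q ^+ 2 != 0 ->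
  trigonal (symgroup_pair (hform e p q 0 0) t).
Proof.
move=> hO hr.
have [phi [cphi sphi]] : exists phi, cos phi = (q ^+ 2 - p ^+ 2) / (p ^+ 2 + q ^+ 2)
                                  /\ sin phi = 2 * p * q / (p ^+ 2 + q ^+ 2).
  by apply: unit_circle_angle; field.
apply/in_classE; exists (rotz (phi / 6)); first exact: rotz_SO3.
apply: sub_O2_conj_Dn.
- by move=> g /(symgroup_pair_O2 _ _ hO) [].
- exact: symgroup_pair_mul.
- exact: symgroup_pair_tr.
- move=> th; rewrite (symgroup_pair_O2 _ _ hO) act4_rotz_hform; split.
    case=> _ /hform_inj [e1 e2 _ _].
    set c3 := cos3_poly _ _ in e1 e2; set s3 := sin3_poly _ _ in e1 e2.
    have e1' : p * c3 - q * (- s3) = p by rewrite -[RHS]e1; ring.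
    have e2' : p * (- s3) + q * c3 = q by rewrite -[RHS]e2; ring.
    have [hC _] := rot_fix_solve e1' e2' hr.
    have [k hk [ck sk]] := cos3_poly_Dn_angle (cos2Dsin2 th) hC.
    by exists k => //; apply: eq_rotz.
  case=> k hk /rotz_inj [ck sk]; split; first by left; exists th.
  have [hC hS] := Dn_angle3_poly R k.
  by rewrite ck sk hC hS; congr hform; ring.
- rewrite (symgroup_pair_O2 _ _ hO) act4_rotz_rotx_pi_hform.
  split; first by right; exists (2 * (phi / 6)).
  rewrite -cos3E -sin3E (_ : 3 * (2 * (phi / 6)) = phi); last by field.
  by rewrite cphi sphi; congr hform; field.
Qed.

End PairClasses.

Section TripleClasses.
Variable R : realType.
Local Open Scope classical_set_scope.
Implicit Types (g k : 'M[R]_3) (t : 'M[R]_3) (K H : tensor4 R) (P : set 'M[R]_3).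

Lemma classes_sub_O2_has_rotz P : P `<=` @O2 R ->
  trigonal P \/ tetragonal P \/ transversely_isotropic P ->
  exists phi, P (rotz phi) /\ sin phi != 0.
Proof.
move=> PO hC; case: hC => [hC|[hC|hC]]; move/in_classE: hC => [h hh hE].
- apply: (conj_sub_O2_has_rotz PO hh hE (k := rotz (Dn_angle R 3 1))).
    by left; exists 1%N.
  by apply/rotz_sqr_neq1/lt0r_neq0/sin_Dn_angle31_gt0.
- apply: (conj_sub_O2_has_rotz PO hh hE (k := rotz (Dn_angle R 4 1))).
    by left; exists 1%N.
  by apply: rotz_sqr_neq1; rewrite (_ : Dn_angle R 4 1 = pi / 2) ?sin_pihalf_neq0 // /Dn_angle; field.
- apply: (conj_sub_O2_has_rotz PO hh hE (k := rotz (pi / 2))).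
    by left; exists (pi / 2).
  exact/rotz_sqr_neq1/sin_pihalf_neq0.
Qed.

Lemma ddot42_uniaxial K a b i j : sym4 K -> traceless4 K ->
  ddot42 K (uniaxial a b) i j = (b - a) * K i j o2 o2.
Proof.
move=> hK hTL; have ps := sym4_swap hK.
have tr : K i j o0 o0 + K i j o1 o1 + K i j o2 o2 = 0.
  by have := hTL i j; rewrite sum_ord3 -!(ps i j).
rewrite mxE !sum_ord3 /uniaxial /mx3 !mxE /=.
transitivity (a * (K i j o0 o0 + K i j o1 o1 + K i j o2 o2) + (b - a) * K i j o2 o2);
  first by ring.
by rewrite tr mulr0 add0r.
Qed.

Lemma pair_classes_triple_TI K t : symgroup2 t = @O2 R -> sym4 K ->
  trigonal (symgroup_pair K t) \/ tetragonal (symgroup_pair K t)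
    \/ transversely_isotropic (symgroup_pair K t) ->
  transversely_isotropic (symgroup_triple (d2 K) t (ddot42 K t)).
Proof.
move=> hO hK hC; have [h12 _ _] := hK.
have PO : symgroup_pair K t `<=` @O2 R by move=> g [sg [_ f]]; rewrite -hO.
have [phi [[sP [fH ft]] sphi]] := classes_sub_O2_has_rotz PO hC.
have fd : act2 (rotz phi) (d2 K) = d2 K by rewrite -d2_act4 // fH.
have fu : act2 (rotz phi) (ddot42 K t) = ddot42 K t by rewrite -ddot42_act4 // fH ft.
have Ed := sym_rotz_fix_uniaxial (d2_sym hK) fd sphi.
have Eu := sym_rotz_fix_uniaxial (ddot42_sym t h12) fu sphi.
apply/in_classE; exists 1%:M; first exact: SO3_1.
rewrite conjset1; apply/seteqP; split => g; first by case=> sg [_ [f _]]; rewrite -hO.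
move=> Og; have [sg ftg] : symgroup2 t g by rewrite hO.
split=> //; split; first by rewrite Ed O2_fix_uniaxial.
by split=> //; rewrite Eu O2_fix_uniaxial.
Qed.

(* [H : t] uniaxial forces [H] into the normal form [hform e p q m s]; then [d2 H]
   uniaxial forces [(p + i q) (m + i s) = 0], so one of the two parts vanishes. *)
Lemma triple_TI_pair_classes K t : t^T = t -> symgroup2 t = @O2 R ->
  sym4 K -> traceless4 K ->
  transversely_isotropic (symgroup_triple (d2 K) t (ddot42 K t)) ->
  trigonal (symgroup_pair K t) \/ tetragonal (symgroup_pair K t)
    \/ transversely_isotropic (symgroup_pair K t).
Proof.
move=> hs hO hK hTL hT; have [h12 _ _] := hK.
have [a [b [ht hab]]] := sym2_O2_uniaxial hs hO.
have TO : symgroup_triple (d2 K) t (ddot42 K t) `<=` @O2 R.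
  by move=> g [sg [_ [f _]]]; rewrite -hO.
have [phi [[_ [fd [_ fu]]] sphi]] := classes_sub_O2_has_rotz TO (or_intror (or_intror hT)).
have Ed := sym_rotz_fix_uniaxial (d2_sym hK) fd sphi.
have Eu := sym_rotz_fix_uniaxial (ddot42_sym t h12) fu sphi.
have uz i j : ddot42 K t i j = (b - a) * K i j o2 o2 by rewrite ht ddot42_uniaxial.
have hba : b - a != 0 by rewrite subr_eq0.
have [z1 z2 z3 z4] : [/\ K o0 o2 o2 o2 = 0, K o1 o2 o2 o2 = 0, K o0 o1 o2 o2 = 0
                       & K o0 o0 o2 o2 = K o1 o1 o2 o2].
  by split; apply: (mulfI hba); rewrite -?uz ?mulr0 Eu /uniaxial /mx3 !mxE.
move: (hform_normal hK hTL z1 z2 z3 z4) Ed => -> Ed.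
set e := _ / 8; set p := K o0 o0 o0 o2; set q := K o1 o1 o1 o2.
set m := _ - _; set s := K o0 o0 o0 o1.
have [d02 d12] : p * m - q * s = 0 /\ p * s + q * m = 0.
  have h4 : (4 : R) != 0 by rewrite pnatr_eq0.
  move: (congr1 (fun M : 'M[R]_3 => M o0 o2) Ed) (congr1 (fun M : 'M[R]_3 => M o1 o2) Ed).
  rewrite d2_hform02 d2_hform12 /uniaxial /mx3 !mxE /= => d02 d12.
  by split; apply: (mulfI h4); rewrite mulr0.
have : (p ^+ 2 + q ^+ 2) * (m ^+ 2 + s ^+ 2) = 0.
  transitivity ((p * m - q * s) ^+ 2 + (p * s + q * m) ^+ 2); first by ring.
  by rewrite d02 d12 expr0n /= addr0.
move/eqP; rewrite mulf_eq0 => /orP [] /eqP hz.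
  have [-> ->] := sqr_add_eq0 hz.
  have [hms|hms] := eqVneq (m ^+ 2 + s ^+ 2) 0.
    by have [-> ->] := sqr_add_eq0 hms; right; right; apply: hform_pair_transversely_isotropic.
  by right; left; apply: hform_pair_tetragonal.
have [-> ->] := sqr_add_eq0 hz.
have [hpq|hpq] := eqVneq (p ^+ 2 + q ^+ 2) 0.
  by have [-> ->] := sqr_add_eq0 hpq; right; right; apply: hform_pair_transversely_isotropic.
by left; apply: hform_pair_trigonal.
Qed.

Lemma transversely_isotropic_normalize t : transversely_isotropic (symgroup2 t) ->
  exists2 k, SO3 k & symgroup2 (act2 k t) = @O2 R.
Proof.
case/in_classE => g hg E; have hgT := SO3_tr hg; exists g^T => //.
by rewrite symgroup2_act2 // E conjsetM SO3_mulTmx // conjset1.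
Qed.

Lemma pair_classes_act k H t : SO3 k ->
  (trigonal (symgroup_pair (act4 k H) (act2 k t))
     \/ tetragonal (symgroup_pair (act4 k H) (act2 k t))
     \/ transversely_isotropic (symgroup_pair (act4 k H) (act2 k t)))
  <-> (trigonal (symgroup_pair H t) \/ tetragonal (symgroup_pair H t)
       \/ transversely_isotropic (symgroup_pair H t)).
Proof.
by move=> hk; rewrite symgroup_pair_act // /trigonal /tetragonal
  /transversely_isotropic !in_class_conjset.
Qed.

Lemma triple_TI_act k H t : SO3 k ->
  transversely_isotropic
    (symgroup_triple (d2 (act4 k H)) (act2 k t) (ddot42 (act4 k H) (act2 k t)))
  <-> transversely_isotropic (symgroup_triple (d2 H) t (ddot42 H t)).
Proof.
move=> hk; rewrite d2_act4 // ddot42_act4 // symgroup_triple_act2 //.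
exact: in_class_conjset.
Qed.

End TripleClasses.

Unset Implicit Arguments.
Theorem corollary9p9 (R : realType) (t : tensor2 R) (H : tensor4 R) :
  is_sym2 t -> transversely_isotropic (symgroup2 t) -> isH4 H ->
  (trigonal (symgroup_pair H t) \/ tetragonal (symgroup_pair H t)
     \/ transversely_isotropic (symgroup_pair H t))
  <-> transversely_isotropic (symgroup_triple (d2 H) t (ddot42 H t)).
Proof.
move=> hs hTI [/totally_symmetric4_sym4 hH hTL].
have [k hk hO] := transversely_isotropic_normalize hTI.
rewrite -(pair_classes_act H t hk) -(triple_TI_act H t hk).
have hs' : (act2 k t)^T = act2 k t by rewrite act2E // !trmx_mul trmxK hs mulmxA.
have hH' : sym4 (act4 k H) by rewrite act4E //; exact: rot4_sym4.
have hTL' : traceless4 (act4 k H).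
  by rewrite act4E //; apply: rot4_traceless => //; exact: SO3_mulTmx.
split; [exact: pair_classes_triple_TI | exact: triple_TI_pair_classes].
Qed.
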